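(* Let $(x,b)$ be a \textsc{Set Radius Strip Cover} instance whose optimal lifetime $T$ is positive. Then there is an optimal radial assignment $\rho$ (with lifetime $T$) that is proper, i.e. (1) $\rho_i\in\{0,b_i/T\}$ for every $i$, and (2) for every active sensor $i$ (one with $\rho_i>0$) there is a point $u_i\in[0,1]$ with $u_i\in[x_i-\rho_i,x_i+\rho_i]$ and $u_i\notin[x_k-\rho_k,x_k+\rho_k]$ for every active $k\ne i$.
   Context: \textsc{Set Radius Strip Cover}: An instance is a pair $(x,b)$, where $x=(x_1,\ldots,x_n)\in[0,1]^n$ with $x_1\le\cdots\le x_n$ are sensor locations and $b=(b_1,\ldots,b_n)$, $b_i\ge0$ rational, are battery charges. A solution is a radial assignment $\rho\in[0,\infty)^n$; all sensors are activated at time $0$. Sensor $i$ with $\rho_i>0$ (an active sensor) covers $[x_i-\rho_i,x_i+\rho_i]$ during $[0,b_i/\rho_i]$; a sensor with $\rho_i=0$ is inactive. The lifetime of $\rho$ is the maximum $T$ such that for every $t\in[0,T]$, $[0,1]\subseteq\bigcup_{i:\rho_i>0,\ b_i/\rho_i\ge t}[x_i-\rho_i,x_i+\rho_i]$. An assignment is optimal if it maximizes the lifetime. *)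

From HB Require Import structures.
From mathcomp Require Import all_boot all_order all_algebra.
From mathcomp Require Import reals.
Set Implicit Arguments. Unset Strict Implicit. Unset Printing Implicit Defensive.
Import Order.TTheory GRing.Theory Num.Theory.
Local Open Scope ring_scope.

Section SRSC.
Variables (R : realType) (n : nat).

Definition srsc_instance (x : 'I_n -> R) (b : 'I_n -> rat) : Prop :=
  (forall i, 0 <= x i <= 1) /\
  (forall i j : 'I_n, (i <= j)%N -> x i <= x j) /\
  (forall i, 0 <= b i).

Definition radial_assignment (rho : 'I_n -> R) : Prop := forall i, 0 <= rho i.

(* At time t, [0,1] is covered by the active sensors still alive at t. *)
Definition covers_at (x : 'I_n -> R) (b : 'I_n -> rat) (rho : 'I_n -> R) (t : R)
  : Prop :=
  forall y : R, 0 <= y <= 1 ->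
    exists i, 0 < rho i /\ t <= ratr (b i) / rho i /\
              x i - rho i <= y <= x i + rho i.

Definition covers_upto x b rho (T : R) : Prop :=
  forall t, 0 <= t <= T -> covers_at x b rho t.

Definition is_lifetime x b rho (T : R) : Prop :=
  0 <= T /\ covers_upto x b rho T /\
  (forall T', 0 <= T' -> covers_upto x b rho T' -> T' <= T).

Definition is_optimal_lifetime x b (T : R) : Prop :=
  (exists rho, radial_assignment rho /\ is_lifetime x b rho T) /\
  (forall rho T', radial_assignment rho -> is_lifetime x b rho T' -> T' <= T).

Definition proper_assignment (x : 'I_n -> R) (b : 'I_n -> rat) (rho : 'I_n -> R) (T : R) : Prop :=
  (forall i, rho i = 0 \/ rho i = ratr (b i) / T) /\
  (forall i, 0 < rho i ->
     exists u : R, 0 <= u <= 1 /\ x i - rho i <= u <= x i + rho i /\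
       forall k, k != i -> 0 < rho k -> ~ (x k - rho k <= u <= x k + rho k)).

End SRSC.

From HB Require Import structures.
From mathcomp Require Import all_boot all_order all_algebra.
From mathcomp Require Import boolp reals.
From mathcomp Require Import lra.
Set Implicit Arguments. Unset Strict Implicit. Unset Printing Implicit Defensive.
Import Order.TTheory GRing.Theory Num.Theory.
Local Open Scope ring_scope.

(* Let rho0 be an assignment of lifetime T. The sensors still alive at time T
   cover [0,1]; each such sensor i has rho0 i <= b_i / T, so giving every one
   of them radius exactly b_i / T still covers [0,1]. An inclusion-minimal
   covering subfamily S of these enlarged intervals yields the proper
   assignment: every active sensor dies exactly at T, and by minimality each
   interval of S has a point that no other interval of S covers. *)

Section IntervalCovers.
Variables (R : realType) (n : nat) (x r : 'I_n -> R).

Definition covered_by (S : {set 'I_n}) : Prop :=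
  forall y : R, 0 <= y <= 1 -> exists2 i, i \in S & x i - r i <= y <= x i + r i.

Definition coveringb : pred {set 'I_n} := fun S => `[< covered_by S >].

Definition minimal_cover (S : {set 'I_n}) : bool := minset coveringb S.

Lemma minimal_cover_exists (A : {set 'I_n}) :
  covered_by A -> exists2 S : {set 'I_n}, S \subset A & minimal_cover S.
Proof.
move=> /asboolP covA; have [S minS sSA] := @minset_exists _ coveringb A covA.
by exists S.
Qed.

Lemma minimal_cover_covered S : minimal_cover S -> covered_by S.
Proof. by move/minsetp/asboolP. Qed.

Lemma minimal_cover_private_point S i : minimal_cover S -> i \in S ->
  exists u : R, [/\ 0 <= u <= 1, x i - r i <= u <= x i + r i &
    forall k, k \in S -> k != i -> ~ (x k - r k <= u <= x k + r k)].
Proof.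
move=> minS Si; apply: contrapT => noU.
suff /(minsetinf minS)/(_ (subsetDl _ _))/setP/(_ i) : coveringb (S :\ i).
  by rewrite !inE Si eqxx.
apply/asboolP => y y01; have [j Sj yj] := minimal_cover_covered minS y01.
have [/eqP eji | nji] := boolP (j == i).
  apply: contrapT => yS; apply: noU; exists y; split=> // [|k Sk nki yk].
    by rewrite -eji.
  by apply: yS; exists k; rewrite // !inE nki.
by exists j; rewrite // !inE nji.
Qed.

End IntervalCovers.

Section UniformRadii.
Variables (R : realType) (n : nat) (x : 'I_n -> R) (b : 'I_n -> rat) (T : R).
Hypothesis T_gt0 : 0 < T.

Definition full_radius (i : 'I_n) : R := ratr (b i) / T.

Definition uniform_radii (S : {set 'I_n}) (i : 'I_n) : R :=
  if i \in S then full_radius i else 0.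

Definition alive_at (rho : 'I_n -> R) : {set 'I_n} :=
  [set i | (0 < rho i) && (T <= ratr (b i) / rho i)].

Lemma alive_full_radius_gt0 rho i : i \in alive_at rho -> 0 < full_radius i.
Proof.
rewrite inE => /andP[rho_gt0 Tle]; apply: divr_gt0 => //.
by rewrite -(pmulr_lgt0 _ (_ : 0 < (rho i)^-1)) ?invr_gt0 // (lt_le_trans T_gt0).
Qed.

Lemma covers_at_alive rho : covers_at x b rho T ->
  covered_by x full_radius (alive_at rho).
Proof.
move=> covT y y01; have [i [rho_gt0 [Tle /andP[yl yr]]]] := covT y y01.
have le_rho : rho i <= full_radius i.
  by rewrite ler_pdivlMr // mulrC -ler_pdivlMr.
by exists i; [rewrite inE rho_gt0 Tle | apply/andP; split; lra].
Qed.

Section Subfamily.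
Variable S : {set 'I_n}.
Hypothesis S_gt0 : forall i, i \in S -> 0 < full_radius i.

Lemma uniform_radii_gt0 i : (0 < uniform_radii S i) = (i \in S).
Proof. by rewrite /uniform_radii; case: ifP => [/S_gt0 -> | _]; rewrite ?ltxx. Qed.

Lemma uniform_radii_ge0 : radial_assignment (uniform_radii S).
Proof.
by move=> i; rewrite /uniform_radii; case: ifP => // /S_gt0 /ltW.
Qed.

Lemma uniform_radii_duration i : i \in S -> ratr (b i) / uniform_radii S i = T.
Proof.
move=> Si; have := S_gt0 Si; rewrite /uniform_radii Si /full_radius.
by rewrite pmulr_lgt0 ?invr_gt0 // => bi_gt0; rewrite divKf // lt0r_neq0.
Qed.

Lemma uniform_radii_lifetime : covered_by x full_radius S ->
  is_lifetime x b (uniform_radii S) T.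
Proof.
move=> covS; split; [exact: ltW | split].
  move=> t /andP[_ tle] y y01; have [i Si yi] := covS y y01.
  exists i; rewrite uniform_radii_gt0 uniform_radii_duration //.
  by rewrite /uniform_radii Si.
move=> T' T'_ge0 covT'.
have T'_range : 0 <= T' <= T' by rewrite lexx T'_ge0.
have [|i [rho_gt0 [T'le _]]] := covT' T' T'_range 0; first by rewrite lexx ler01.
by rewrite -(uniform_radii_duration (_ : i \in S)) // -uniform_radii_gt0.
Qed.

Lemma uniform_radii_proper : minimal_cover x full_radius S ->
  proper_assignment x b (uniform_radii S) T.
Proof.
move=> minS; split=> [i | i].
  by rewrite /uniform_radii; case: ifP; [right | left].
rewrite uniform_radii_gt0 => Si.
have [u [u01 ui uk]] := minimal_cover_private_point minS Si.
exists u; split=> //; split=> [|k nki]; first by rewrite /uniform_radii Si.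
rewrite uniform_radii_gt0 => Sk.
by rewrite /uniform_radii Sk; apply: uk.
Qed.

End Subfamily.
End UniformRadii.

Theorem lemma10 (R : realType) (n : nat) (x : 'I_n -> R) (b : 'I_n -> rat)
  (T : R) :
  srsc_instance x b -> is_optimal_lifetime x b T -> 0 < T ->
  exists rho : 'I_n -> R,
    radial_assignment rho /\ is_lifetime x b rho T /\ proper_assignment x b rho T.
Proof.
move=> _ [[rho0 [_ [_ [covT0 _]]]] _] T_gt0.
have T_range : 0 <= T <= T by rewrite lexx ltW.
have [S sSA minS] := minimal_cover_exists (covers_at_alive T_gt0 (covT0 T T_range)).
have S_gt0 i : i \in S -> 0 < full_radius b T i.
  by move=> /(subsetP sSA); apply: alive_full_radius_gt0.
exists (uniform_radii b T S); split; first exact: uniform_radii_ge0.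
split; first exact/uniform_radii_lifetime/minimal_cover_covered.
exact: uniform_radii_proper.
Qed.
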